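(* Let $r\in\mathbb Z_n$, $0\le j\le\frac{n-1}2$, and let $\mathbf w_0\neq0$ be a row vector with $\mathbf w_0Z=q^{2r}\mathbf w_0$. For $1\le k\le n-1$ let $\mathbf w_k=q^{kr}\mathcal L_k(q^j+q^{-j})\mathbf w_0=q^{kr}(q^{kj}+q^{-kj})\mathbf w_0$. Then the row vector $\mathbf w_{j,r}=[\mathbf w_{n-1}\ \mathbf w_{n-2}\ \cdots\ \mathbf w_1\ \mathbf w_0]$ satisfies $\mathbf w_{j,r}M=\lambda_{j,r}\mathbf w_{j,r}$, $\lambda_{j,r}=q^r(q^j+q^{-j})$. In particular (for $j=r=0$, $\mathbf w_0=[1\cdots1]$) a multiple of the dimension vector of the projective indecomposable $D_n$-modules is a left eigenvector of $M$ with eigenvalue $2$.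
   Context: $n\ge3$ odd, $q$ a primitive $n$-th root of unity in $\mathbb C$. $I$ is the $n\times n$ identity, $Z$ the $n\times n$ cyclic permutation matrix with $(Zu)_i=u_{i+1}$ (indices mod $n$). $M$ is the $n^2\times n^2$ block matrix of $n\times n$ blocks $M_{ab}$ ($0\le a,b\le n-1$) with $M_{a,a+1}=I$ ($0\le a\le n-2$), $M_{a,a-1}=Z$ ($1\le a\le n-2$), $M_{n-1,0}=2I$, $M_{n-1,n-2}=2Z$, other blocks zero (the McKay matrix of the $D_n$-module $V(2,0)$); row vectors of length $n^2$ are written as $n$ blocks of length $n$ matching this block structure. $\mathcal L_k(t)$: $\mathcal L_0=2$, $\mathcal L_1=t$, $\mathcal L_k=t\mathcal L_{k-1}-\mathcal L_{k-2}$; one has $\mathcal L_k(x+x^{-1})=x^k+x^{-k}$. The projective indecomposable modules $P(\ell,r)$ ($1\le\ell<n$) have dimension $2n$ and $V(n,r)$ has dimension $n$. *)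

From mathcomp Require Import all_boot all_order all_algebra all_field.
Set Implicit Arguments. Unset Strict Implicit. Unset Printing Implicit Defensive.
Import Order.TTheory GRing.Theory Num.Theory.
Local Open Scope ring_scope.

Fixpoint Lpoly {R : pzRingType} (t : R) (k : nat) : R :=
  match k with
  | O => 2
  | S k1 => match k1 with
            | O => t
            | S k2 => t * Lpoly t k1 - Lpoly t k2
            end
  end.

Definition Zmx (n : nat) : 'M[algC]_n :=
  \matrix_(i, i') ((i' : nat) == (i.+1 %% n)%N)%:R.

(* the blocks M_{ab} of the McKay matrix of V(2,0) *)
Definition Mblock (n a b : nat) : 'M[algC]_n :=
  if (b == a.+1) && (a <= n - 2)%N then 1%:M
  else if (b.+1 == a) && (1 <= a <= n - 2)%N then Zmx n
  else if (a == n - 1)%N && (b == 0)%N then 2%:M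
  else if (a == n - 1)%N && (b == n - 2)%N then 2%:R *: Zmx n
  else 0.

Lemma ord_sq_gt0 n (k : 'I_(n * n)) : (0 < n)%N.
Proof. by case: n k => [|n] [k hk]. Qed.

Definition blkno n (k : 'I_(n * n)) : nat := (k %/ n)%N.
Definition blkpos n (k : 'I_(n * n)) : 'I_n := Ordinal (ltn_pmod k (ord_sq_gt0 k)).

Definition McKayM (n : nat) : 'M[algC]_(n * n) :=
  \matrix_(k, l) Mblock n (blkno k) (blkno l) (blkpos k) (blkpos l).

Definition wblock n (q : algC) (j r : nat) (w0 : 'rV[algC]_n) (k : nat) : 'rV[algC]_n :=
  if k == 0%N then w0
  else (q ^+ (k * r) * Lpoly (q ^+ j + q ^- j) k) *: w0.

(* w_{j,r} = [w_{n-1} w_{n-2} ... w_1 w_0] : block a is w_{n-1-a} *)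
Definition wvec n (q : algC) (j r : nat) (w0 : 'rV[algC]_n) : 'rV[algC]_(n * n) :=
  \row_k (wblock q j r w0 (n - 1 - blkno k)%N) 0 (blkpos k).

(* dimension vector of the projective indecomposables, ordered like the
   McKay matrix: block a (0 <= a <= n-2) <-> P(a+1, r) of dim 2n,
   block n-1 <-> V(n, r) of dim n; position i in a block <-> r = i. *)
Definition dimvec_proj (n : nat) : 'rV[algC]_(n * n) :=
  \row_k (if (blkno k < n - 1)%N then (2 * n)%:R else n%:R).

(* Write a row vector of length n^2 as n blocks [v_0 ... v_{n-1}]; then
   (v M)_b = sum_a v_a M_{ab}, so column block b of w_{j,r} M only involves
   the (at most two) blocks a with M_{ab} <> 0.  In w_{j,r} block a is
   w_{n-1-a}, and for k >= 1 one has w_k = c_k w_0 with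
   c_k = y^k (x^k + x^-k), y = q^r, x = q^j (Chebyshev identity for L_k).
   Since w_0 Z = y^2 w_0, each column-block identity reduces to the scalar
   recurrence c_{k+2} + y^2 c_k = y (x + x^-1) c_{k+1}, plus, at the two
   ends of the chain, c_1 = y (x + x^-1) and c_n = 2 (as q^n = 1). *)
From mathcomp Require Import all_boot all_order all_algebra all_field.
From mathcomp Require Import zify ring.
Import GRing.Theory Num.Theory.
Set Implicit Arguments. Unset Strict Implicit.
Local Open Scope ring_scope.

Lemma mkidx_lt n (a i : 'I_n) : (a * n + i < n * n)%N.
Proof. have := ltn_ord a; have := ltn_ord i; nia. Qed.

Definition mkidx n (a i : 'I_n) : 'I_(n * n) := Ordinal (mkidx_lt a i).

Lemma blkno_lt n (k : 'I_(n * n)) : (blkno k < n)%N.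
Proof. by rewrite /blkno ltn_divLR ?(ord_sq_gt0 k). Qed.

Lemma blkno_mkidx n (a i : 'I_n) : blkno (mkidx a i) = a.
Proof.
rewrite /blkno /= divnMDl; last by have := ltn_ord a; lia.
by rewrite divn_small ?addn0.
Qed.

Lemma blkpos_mkidx n (a i : 'I_n) : blkpos (mkidx a i) = i.
Proof. by apply: val_inj; rewrite /= modnMDl modn_small. Qed.

Lemma sum_blocks (V : nmodType) n (F : 'I_(n * n) -> V) :
  \sum_k F k = \sum_(a < n) \sum_(i < n) F (mkidx a i).
Proof.
rewrite pair_bigA /= (reindex (fun p : 'I_n * 'I_n => mkidx p.1 p.2)) //=.
exists (fun k => (Ordinal (blkno_lt k), blkpos k)) => [[a i] _|k _] /=.
  by congr pair; [apply: val_inj; rewrite /= blkno_mkidx | rewrite blkpos_mkidx].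
by apply: val_inj; rewrite /= /blkno [in RHS](divn_eq k n); lia.
Qed.

Definition block n (w : 'rV[algC]_(n * n)) (a : 'I_n) : 'rV[algC]_n :=
  \row_i w 0 (mkidx a i).

Lemma mulmx_McKay n (w : 'rV[algC]_(n * n)) l :
  (w *m McKayM n) 0 l =
  (\sum_(a < n) block w a *m Mblock n a (blkno l)) 0 (blkpos l).
Proof.
rewrite !mxE sum_blocks summxE; apply: eq_bigr => a _.
rewrite !mxE; apply: eq_bigr => i _.
by rewrite !mxE blkno_mkidx blkpos_mkidx.
Qed.

Lemma block_wvec n q j r w0 (a : 'I_n) :
  block (wvec q j r w0) a = wblock q j r w0 (n - 1 - a).
Proof. by apply/rowP => i; rewrite !mxE blkno_mkidx blkpos_mkidx. Qed.

Lemma Mblock_super n a b : b = a.+1 -> (a <= n - 2)%N -> Mblock n a b = 1%:M.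
Proof. by move=> -> h; rewrite /Mblock eqxx h. Qed.

Lemma Mblock_sub n a b : a = b.+1 -> (1 <= a <= n - 2)%N -> Mblock n a b = Zmx n.
Proof.
move=> -> h; rewrite /Mblock eqxx h.
by have -> : (b == b.+2) = false by apply/negbTE; lia.
Qed.

Lemma Mblock_corner n a b : (3 <= n)%N -> a = (n - 1)%N -> b = 0%N ->
  Mblock n a b = 2%:M.
Proof.
move=> hn -> ->; rewrite /Mblock eqxx.
have -> : (0 == (n - 1).+1)%N = false by apply/negbTE; lia.
by have -> : (1 == n - 1)%N = false by apply/negbTE; lia.
Qed.

Lemma Mblock_last n a b : (3 <= n)%N -> a = (n - 1)%N -> b = (n - 2)%N ->
  Mblock n a b = 2%:R *: Zmx n.
Proof.
move=> hn -> ->; rewrite /Mblock !eqxx.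
have -> : (n - 2 == (n - 1).+1)%N = false by apply/negbTE; lia.
have -> : (n - 1 <= n - 2)%N = false by apply/negbTE; lia.
have -> : (n - 2 == 0)%N = false by apply/negbTE; lia.
by rewrite !andbF.
Qed.

Lemma Mblock_zero n a b : (3 <= n)%N ->
  b <> a.+1 -> ~ (a = b.+1 /\ (a <= n - 2)%N) -> ~ (a = (n - 1)%N /\ b = 0%N) ->
  ~ (a = (n - 1)%N /\ b = (n - 2)%N) -> Mblock n a b = 0.
Proof.
move=> hn h1 h2 h3 h4; rewrite /Mblock.
have -> : (b == a.+1) = false by apply/negbTE; lia.
have -> : (b.+1 == a) && (1 <= a <= n - 2)%N = false.
  by apply/negbTE/negP => /andP[/eqP ? /andP[? ?]]; apply: h2; split; lia.
have -> : (a == n - 1)%N && (b == 0)%N = false.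
  by apply/negbTE/negP => /andP[/eqP ? /eqP ?]; apply: h3; split; lia.
have -> : (a == n - 1)%N && (b == n - 2)%N = false.
  by apply/negbTE/negP => /andP[/eqP ? /eqP ?]; apply: h4; split; lia.
by [].
Qed.

Lemma Lpoly_inv (F : fieldType) (x : F) k :
  x != 0 -> Lpoly (x + x^-1) k = x ^+ k + x ^- k.
Proof.
move=> x0.
suff : Lpoly (x + x^-1) k = x ^+ k + x ^- k /\
       Lpoly (x + x^-1) k.+1 = x ^+ k.+1 + x ^- k.+1 by case.
elim: k => [|k [IH1 IH2]]; first by rewrite /= expr0 invr1 expr1.
split=> //; rewrite [Lpoly _ k.+2]/= -/(Lpoly (x + x^-1) k.+1) IH2.
rewrite -/(Lpoly (x + x^-1) k) IH1 !exprS; field.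
by rewrite expf_neq0.
Qed.

Definition wcoef (F : fieldType) (y x : F) k := y ^+ k * (x ^+ k + x ^- k).

Lemma wcoef_rec (F : fieldType) (y x : F) k : x != 0 ->
  wcoef y x k.+2 + wcoef y x k * y ^+ 2 = y * (x + x^-1) * wcoef y x k.+1.
Proof. by move=> x0; rewrite /wcoef !exprS; field; rewrite expf_neq0. Qed.

Lemma sum_support1 (V : zmodType) n (F : nat -> V) x : (x < n)%N ->
  (forall a, (a < n)%N -> a <> x -> F a = 0) -> \sum_(a < n) F a = F x.
Proof.
move=> hx H; rewrite (bigD1 (Ordinal hx)) //= big1 ?addr0 // => a ha.
by apply: H => // e; move: ha; rewrite -val_eqE /= e eqxx.
Qed.

Lemma sum_support2 (V : zmodType) n (F : nat -> V) x y :
  (x < n)%N -> (y < n)%N -> x <> y ->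
  (forall a, (a < n)%N -> a <> x -> a <> y -> F a = 0) ->
  \sum_(a < n) F a = F x + F y.
Proof.
move=> hx hy nxy H; rewrite (bigD1 (Ordinal hx)) //= (bigD1 (Ordinal hy)) /=.
  rewrite big1 ?addr0 // => a /andP[ha hb].
  by apply: H => // e; [move: ha | move: hb]; rewrite -val_eqE /= e eqxx.
by rewrite -val_eqE /=; apply/eqP => e; apply: nxy.
Qed.

Section ColumnBlocks.

Variables (n : nat) (q : algC) (j r : nat) (w0 : 'rV[algC]_n).
Hypotheses (n_ge3 : (3 <= n)%N) (qn : q ^+ n = 1) (q_neq0 : q != 0).
Hypothesis w0Z : w0 *m Zmx n = q ^+ (2 * r) *: w0.

Let y := q ^+ r.
Let x := q ^+ j.
Let w k := wblock q j r w0 k.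

Let x_neq0 : x != 0. Proof. exact: expf_neq0. Qed.

Let col b a := w (n - 1 - a)%N *m Mblock n a b.

Lemma wblock_coef k : (0 < k)%N -> w k = wcoef y x k *: w0.
Proof.
move=> hk; rewrite /w /wblock; case: eqP => [?|_]; first lia.
by rewrite Lpoly_inv // /wcoef mulnC exprM.
Qed.

(* The block w_0 is w_0 itself (and not c_0 w_0 = 2 w_0). *)
Lemma wblock_0 : w 0 = w0. Proof. by []. Qed.

Lemma scale_w0_Z c : (c *: w0) *m Zmx n = (c * y ^+ 2) *: w0.
Proof. by rewrite -scalemxAl w0Z scalerA /y -exprM mulnC. Qed.

(* b = n-1: only M_{n-2,n-1} = I contributes, and w_1 = y (x + x^-1) w_0. *)
Lemma column_last :
  \sum_(a < n) col (n - 1) a = (y * (x + x^-1)) *: w (n - 1 - (n - 1)).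
Proof.
rewrite (@sum_support1 _ n _ (n - 2)); last first.
- by move=> a _ ?; rewrite /col Mblock_zero ?mulmx0 //; lia.
- lia.
rewrite /col (@Mblock_super n (n - 2)); [|lia|lia].
have -> : (n - 1 - (n - 2) = 1)%N by lia.
by rewrite mulmx1 subnn wblock_coef // /wcoef !expr1.
Qed.

(* b = n-2: w_2 I + w_0 (2Z) = c_2 w_0 + 2 y^2 w_0 = y (x + x^-1) c_1 w_0. *)
Lemma column_penult :
  \sum_(a < n) col (n - 2) a = (y * (x + x^-1)) *: w (n - 1 - (n - 2)).
Proof.
rewrite (@sum_support2 _ n _ (n - 3) (n - 1)); last first.
- by move=> a _ ? ?; rewrite /col Mblock_zero ?mulmx0 //; lia.
- lia. - lia. - lia.
rewrite /col (@Mblock_super n (n - 3)); [|lia|lia].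
rewrite mulmx1 (@Mblock_last n (n - 1)) // subnn.
have -> : (n - 1 - (n - 3) = 2)%N by lia.
have -> : (n - 1 - (n - 2) = 1)%N by lia.
rewrite wblock_0 !wblock_coef // -scalemxAr -{2}(scale1r w0) scale_w0_Z.
rewrite !scalerA -scalerDl; congr (_ *: _).
by rewrite /wcoef; field; rewrite expf_neq0.
Qed.

(* b = 0: w_{n-2} Z + w_0 (2I) = (c_{n-2} y^2 + c_n) w_0, using c_n = 2. *)
Lemma column_first :
  \sum_(a < n) col 0 a = (y * (x + x^-1)) *: w (n - 1 - 0).
Proof.
rewrite (@sum_support2 _ n _ 1 (n - 1)); last first.
- by move=> a _ ? ?; rewrite /col Mblock_zero ?mulmx0 //; lia.
- lia. - lia. - lia.
rewrite /col (@Mblock_sub n 1); [|lia|lia].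
rewrite (@Mblock_corner n (n - 1)) // subnn mul_mx_scalar subn0.
rewrite wblock_0 !wblock_coef; [|lia|lia].
rewrite scale_w0_Z -{2}(scale1r w0) !scalerA -scalerDl.
congr (_ *: _).
have -> : (n - 1 - 1 = (n - 3).+1)%N by lia.
have -> : (n - 1 = (n - 3).+2)%N by lia.
rewrite -wcoef_rec //.
have -> : ((n - 3).+3 = n)%N by lia.
have yn : y ^+ n = 1 by rewrite /y -exprM mulnC exprM qn expr1n.
have xn : x ^+ n = 1 by rewrite /x -exprM mulnC exprM qn expr1n.
by rewrite /wcoef yn xn invr1 mul1r mulr1; ring.
Qed.

(* 0 < b < n-2: w_{n-b} I + w_{n-2-b} Z, exactly the recurrence for c_k. *)
Lemma column_middle b : (0 < b < n - 2)%N ->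
  \sum_(a < n) col b a = (y * (x + x^-1)) *: w (n - 1 - b).
Proof.
move=> hb; rewrite (@sum_support2 _ n _ (b - 1) (b + 1)); last first.
- by move=> a _ ? ?; rewrite /col Mblock_zero ?mulmx0 //; lia.
- lia. - lia. - lia.
rewrite /col (@Mblock_super n (b - 1)); [|lia|lia].
rewrite mulmx1 (@Mblock_sub n (b + 1)); [|lia|lia].
have -> : (n - 1 - (b - 1) = (n - 3 - b).+3)%N by lia.
have -> : (n - 1 - (b + 1) = (n - 3 - b).+1)%N by lia.
have -> : (n - 1 - b = (n - 3 - b).+2)%N by lia.
by rewrite !wblock_coef // scale_w0_Z !scalerA -scalerDl wcoef_rec.
Qed.

Lemma column_eigen b : (b < n)%N ->
  \sum_(a < n) col b a = (y * (x + x^-1)) *: w (n - 1 - b).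
Proof.
move=> hb.
have [->|nb1] := eqVneq b (n - 1)%N; first exact: column_last.
have [->|nb2] := eqVneq b (n - 2)%N; first exact: column_penult.
have [->|nb0] := eqVneq b 0%N; first exact: column_first.
by apply: column_middle; lia.
Qed.

Lemma wvec_eigen :
  wvec q j r w0 *m McKayM n = (q ^+ r * (q ^+ j + q ^- j)) *: wvec q j r w0.
Proof.
apply/rowP => l; rewrite mulmx_McKay.
under eq_bigr => a _ do rewrite block_wvec.
by rewrite (column_eigen (blkno_lt l)) !mxE.
Qed.

End ColumnBlocks.

Lemma const1_Z n : const_mx 1 *m Zmx n = const_mx (1 : algC) :> 'rV_n.
Proof.
apply/rowP => i'; rewrite !mxE.
under eq_bigr => i _ do rewrite !mxE mul1r -[(i.+1 %% n)%N]/(val (ordS i)).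
transitivity (\sum_(i < n) ((i' : nat) == val i)%:R : algC).
  by symmetry; exact: (reindex_inj (@ordS_inj n)).
rewrite (bigD1 i') //= eqxx big1 ?addr0 // => i ne.
by rewrite eq_sym; move: ne; rewrite -val_eqE => /negbTE ->.
Qed.

(* n w_{0,0} (with w_0 = [1 ... 1]) is the dimension vector: every block
   w_k = L_k(2) w_0 = 2 w_0 for k >= 1, and the last block is w_0. *)
Lemma wvec_dimvec n (q : algC) :
  n%:R *: wvec q 0 0 (const_mx 1) = dimvec_proj n.
Proof.
apply/rowP => k; rewrite !mxE; have hk := blkno_lt k.
case: ifP => h; last first.
  have -> : (n - 1 - blkno k = 0)%N by lia.
  by rewrite /wblock /= mxE mulr1.
rewrite /wblock; case: eqP => [?|_]; first lia.
rewrite expr0 invr1 !mxE.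
have := Lpoly_inv (n - 1 - blkno k) (oner_neq0 algC).
rewrite expr1n invr1 => ->.
by rewrite muln0 expr0 mul1r mulr1 natrM mulrC.
Qed.

Theorem mainTheorem16 (n : nat) (q : algC) :
  (3 <= n)%N -> odd n -> n.-primitive_root q ->
  (forall (r : 'I_n) (j : nat) (w0 : 'rV[algC]_n),
      (j <= (n - 1) %/ 2)%N -> w0 != 0 ->
      w0 *m Zmx n = q ^+ (2 * r) *: w0 ->
      wvec q j r w0 *m McKayM n = (q ^+ r * (q ^+ j + q ^- j)) *: wvec q j r w0)
  /\
  (let v := wvec q 0 0 (const_mx 1) in
   n%:R *: v = dimvec_proj n /\ dimvec_proj n *m McKayM n = 2 *: dimvec_proj n).
Proof.
move=> hn _ pq.
have qn := prim_expr_order pq.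
have q_neq0 : q != 0.
  have n_gt0 : (0 < n)%N by lia.
  apply/eqP => q0; move: qn; rewrite q0 expr0n gtn_eqF //.
  by move/eqP; rewrite eq_sym oner_eq0.
split=> [r j w0 _ _ w0Z|v]; first exact: wvec_eigen.
have dimE : n%:R *: v = dimvec_proj n := wvec_dimvec n q.
split=> //; rewrite -dimE -scalemxAl.
have := @wvec_eigen n q 0 0 (const_mx 1) hn qn q_neq0.
rewrite muln0 expr0 scale1r const1_Z => /(_ erefl) ->.
by rewrite invr1 mul1r !scalerA mulrC.
Qed.
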